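(* Every palindrome that is a factor of $\Lambda_\theta$ contains at most three distinct letters.
   Context: Fix an irrational $\theta$ with $1<\theta<2$. Let $S(\theta)=\{i+j\theta : i,j\in\mathbb{N}_0\}$ and let $s_0<s_1<s_2<\cdots$ be its elements in increasing order. Put $\delta(n)=s_{n+1}-s_n$. Let $\lambda$ be the map from the set of values $\{\delta(n):n\ge0\}$ to $\mathbb{N}_0$ that numbers the distinct values in order of first occurrence: $\lambda(\delta(0))=0$, and the $m$-th distinct value to appear in the sequence $\delta(0),\delta(1),\dots$ (counting from $m=0$) receives label $m$. The Lambda word is the right-infinite word $\Lambda_\theta=\lambda(\delta(0))\lambda(\delta(1))\lambda(\delta(2))\cdots$ over the alphabet $\mathbb{N}_0$. A factor is a finite block of consecutive letters; a palindrome is a finite word equal to its reversal. *)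

From Stdlib Require Import Reals List Arith.
Import ListNotations.
Open Scope R_scope.

Definition irrational (x : R) : Prop :=
  ~ exists (p q : Z), q <> 0%Z /\ x = IZR p / IZR q.

Definition inS (theta x : R) : Prop :=
  exists i j : nat, x = INR i + INR j * theta.

Definition is_S_enum (theta : R) (s : nat -> R) : Prop :=
  (forall n, s n < s (S n)) /\
  (forall n, inS theta (s n)) /\
  (forall x, inS theta x -> exists n, s n = x).

Definition delta (s : nat -> R) (n : nat) : R := s (S n) - s n.

Definition first_occ (d : nat -> R) (n : nat) : nat :=
  (fix go (k fuel : nat) : nat :=
     match fuel with
     | O => k
     | S f => if Req_EM_T (d k) (d n) then k else go (S k) f
     end) O n.

Definition is_newb (d : nat -> R) (m : nat) : bool :=
  Nat.eqb (first_occ d m) m.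

(* lambda labelling: label of d n = number of distinct values that
   occurred before the first occurrence of the value d n *)
Definition lam (d : nat -> R) (n : nat) : nat :=
  length (filter (is_newb d) (seq 0 (first_occ d n))).

Definition Lambda_word (s : nat -> R) (n : nat) : nat := lam (delta s) n.

Definition factor_palindrome (w : nat -> nat) (i L : nat) : Prop :=
  forall t, (t < L)%nat -> w (i + t)%nat = w (i + (L - 1 - t))%nat.

Definition factor_at_most_3_letters (w : nat -> nat) (i L : nat) : Prop :=
  exists a b c : nat, forall t, (t < L)%nat ->
    w (i + t)%nat = a \/ w (i + t)%nat = b \/ w (i + t)%nat = c.

(* Write the points of S(theta) as values V(i,j) = i + j theta of
   lattice points (i,j) in N^2; by irrationality these coordinates are unique.
   A palindromic factor of the Lambda word at positions i .. i+L-1 has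
   palindromic gaps (the labelling is injective on gap values), so the block
   s_i < ... < s_{i+L} of consecutive points is centrally symmetric: its
   lattice points lie in the box [0,I] x [0,J] spanned by the two end points
   and the point reflection (x,y) |-> (I-x, J-y) maps the block onto itself.
   Descending the Stern-Brocot tree we find Farey neighbours a/b < theta < c/d
   adapted to the box, giving positive gaps A = b theta - a, B = c - d theta;
   every lattice vector has integer coordinates (s,t) in the basis (A,B).
   For two consecutive points of a symmetric block, the gap has nonnegative
   coordinates (otherwise the mediant fits into the box), is at most A + B
   (otherwise the reflected gap admits an intermediate point), and hence is
   A, B or A + B.  Three gap values give at most three labels. *)

From Stdlib Require Import Reals List ZArith Lia Lra Psatz Classical ClassicalEpsilon.
Open Scope R_scope.

(** * The labelling [lam] is an injective function of the gap value *)

Definition scan (d : nat -> R) (n : nat) : nat -> nat -> nat :=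
  fix go (k fuel : nat) : nat :=
  match fuel with
  | O => k
  | S f => if Req_EM_T (d k) (d n) then k else go (S k) f
  end.

Lemma scan_spec (d : nat -> R) (n : nat) : forall fuel k,
  (k <= scan d n k fuel <= k + fuel)%nat /\
  (forall m, (k <= m < scan d n k fuel)%nat -> d m <> d n) /\
  ((scan d n k fuel < k + fuel)%nat -> d (scan d n k fuel) = d n).
Proof.
  induction fuel as [|f IH]; intros k; simpl.
  - repeat split; intros; lia.
  - destruct (Req_EM_T (d k) (d n)) as [E|E].
    + repeat split; intros; auto; lia.
    + destruct (IH (S k)) as (Hb & Hmin & Hval).
      repeat split; try lia.
      * intros m Hm. destruct (Nat.eq_dec m k) as [->|Hne]; [exact E|].
        apply Hmin; lia.
      * intros Hlt. apply Hval; lia.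
Qed.

Lemma first_occ_spec (d : nat -> R) (n : nat) :
  d (first_occ d n) = d n /\ forall m, (m < first_occ d n)%nat -> d m <> d n.
Proof.
  destruct (scan_spec d n n 0) as (Hb & Hmin & Hval).
  change (first_occ d n) with (scan d n 0 n). split.
  - destruct (Nat.eq_dec (scan d n 0 n) n) as [E|E].
    + rewrite E. reflexivity.
    + apply Hval; lia.
  - intros m Hm. apply Hmin; lia.
Qed.

Lemma first_occ_eq (d : nat -> R) (n m : nat) :
  d n = d m -> first_occ d n = first_occ d m.
Proof.
  intros E. destruct (first_occ_spec d n) as [Hn Hnmin].
  destruct (first_occ_spec d m) as [Hm Hmmin].
  destruct (lt_eq_lt_dec (first_occ d n) (first_occ d m)) as [[H|H]|H]; auto.
  - exfalso. apply (Hmmin _ H). congruence.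
  - exfalso. apply (Hnmin _ H). congruence.
Qed.

Lemma is_newb_first_occ (d : nat -> R) (n : nat) : is_newb d (first_occ d n) = true.
Proof.
  unfold is_newb. apply Nat.eqb_eq, first_occ_eq, first_occ_spec.
Qed.

Lemma count_new_lt (P : nat -> bool) (f1 f2 : nat) : (f1 < f2)%nat -> P f1 = true ->
  (length (filter P (seq 0 f1)) < length (filter P (seq 0 f2)))%nat.
Proof.
  intros Hlt HP.
  replace f2 with (f1 + S (f2 - f1 - 1))%nat by lia.
  rewrite seq_app, filter_app, length_app. simpl. rewrite HP. simpl. lia.
Qed.

Lemma lam_eq_iff (d : nat -> R) (n m : nat) : lam d n = lam d m <-> d n = d m.
Proof.
  split; [|intros E; unfold lam; rewrite (first_occ_eq d n m E); reflexivity].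
  intros H. destruct (first_occ_spec d n) as [Hn _].
  destruct (first_occ_spec d m) as [Hm _]. unfold lam in H.
  destruct (lt_eq_lt_dec (first_occ d n) (first_occ d m)) as [[Hl|He]|Hl].
  - pose proof (count_new_lt (is_newb d) _ _ Hl (is_newb_first_occ d n)). lia.
  - rewrite <- Hn, <- Hm, He. reflexivity.
  - pose proof (count_new_lt (is_newb d) _ _ Hl (is_newb_first_occ d m)). lia.
Qed.

Lemma label_of_value (d : nat -> R) (u : R) : exists a, forall n, d n = u -> lam d n = a.
Proof.
  destruct (classic (exists n, d n = u)) as [[n0 H0]|Hnone].
  - exists (lam d n0). intros n Hn. apply lam_eq_iff. congruence.
  - exists O. intros n Hn. exfalso. eauto.
Qed.

Lemma lam_three_letters (d : nat -> R) (i L : nat) (u v w : R) :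
  (forall t, (t < L)%nat -> d (i + t)%nat = u \/ d (i + t)%nat = v \/ d (i + t)%nat = w) ->
  factor_at_most_3_letters (lam d) i L.
Proof.
  intros H3.
  destruct (label_of_value d u) as [la Ha].
  destruct (label_of_value d v) as [lb Hb].
  destruct (label_of_value d w) as [lc Hc].
  exists la, lb, lc. intros t Ht.
  destruct (H3 t Ht) as [E|[E|E]]; auto.
Qed.

(** * Lattice points and Farey brackets *)

(* The value of the lattice point (i,j); S(theta) is its image on N^2. *)
Definition V (th : R) (i j : Z) : R := IZR i + IZR j * th.

Definition no_point_between (th : R) (u v : R) : Prop :=
  forall i j : Z, (0 <= i)%Z -> (0 <= j)%Z -> ~ (u < V th i j < v).

Ltac unfold_V :=
  unfold V in *; repeat progress rewrite ?plus_IZR, ?minus_IZR, ?opp_IZR, ?mult_IZR in *.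

Lemma irrational_no_relation (th : R) (p q : Z) :
  irrational th -> (q <> 0)%Z -> IZR q * th <> IZR p.
Proof.
  intros Hirr Hq E. apply Hirr. exists p, q. split; [exact Hq|].
  apply not_0_IZR in Hq. rewrite <- E. field. exact Hq.
Qed.

Lemma V_inj (th : R) (i j i' j' : Z) :
  irrational th -> V th i j = V th i' j' -> i = i' /\ j = j'.
Proof.
  intros Hirr E. unfold V in E.
  destruct (Z.eq_dec j j') as [->|Hne].
  - split; [apply eq_IZR; lra | reflexivity].
  - exfalso. apply (irrational_no_relation th (i - i') (j' - j) Hirr); [lia|].
    rewrite !minus_IZR. lra.
Qed.

(* Farey neighbours a/b < th < c/d (that is, b c - a d = 1); they determine
   the positive gaps A = b th - a and B = c - d th. *)
Definition farey_bracket (th : R) (a b c d : Z) : Prop :=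
  (b * c - a * d = 1)%Z /\ (0 <= a)%Z /\ (0 <= b)%Z /\ (0 <= c)%Z /\ (0 <= d)%Z /\
  0 < IZR b * th - IZR a /\ 0 < IZR c - IZR d * th.

(* The bracket is adapted to the box [0,I] x [0,J]: the vectors (-a,b) and
   (c,-d) of the gaps A and B fit, while their sum (the mediant) does not. *)
Definition box_adapted (I J a b c d : Z) : Prop :=
  (a <= I)%Z /\ (d <= J)%Z /\ (I < a + c \/ J < b + d)%Z.

(* Stern-Brocot descent: replace the bracket side on which the mediant falls
   until the mediant leaves the box; the measure (I - a) + (J - d) decreases. *)
Lemma farey_descent (th : R) (I J : Z) : irrational th ->
  forall (n : nat) (a b c d : Z), farey_bracket th a b c d ->
  (a <= I)%Z -> (d <= J)%Z -> ((I - a) + (J - d) < Z.of_nat n)%Z ->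
  exists a' b' c' d', farey_bracket th a' b' c' d' /\ box_adapted I J a' b' c' d'.
Proof.
  intros Hirr n. induction n as [|n IH]; intros a b c d Hf HaI HdJ Hn; [lia|].
  pose proof Hf as (Hdet & Ha & Hb & Hc & Hd & HA & HB).
  assert (Hb1 : (1 <= b)%Z) by nia.
  assert (Hc1 : (1 <= c)%Z) by nia.
  destruct (total_order_T (IZR b * th - IZR a) (IZR c - IZR d * th)) as [[Hlt|Heq]|Hgt].
  - destruct (Z_le_gt_dec (d + b) J) as [Hfit|Hout].
    + apply (IH a b (c + a)%Z (d + b)%Z); try lia.
      repeat split; try lia; rewrite ?plus_IZR; lra.
    + exists a, b, c, d. repeat split; auto; lia.
  - exfalso. apply (irrational_no_relation th (a + c)%Z (b + d)%Z Hirr); [lia|].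
    rewrite !plus_IZR. lra.
  - destruct (Z_le_gt_dec (a + c) I) as [Hfit|Hout].
    + apply (IH (a + c)%Z (b + d)%Z c d); try lia.
      repeat split; try lia; rewrite ?plus_IZR; lra.
    + exists a, b, c, d. repeat split; auto; lia.
Qed.

(* Every box has an adapted Farey bracket, starting the descent at 0/1 < th < 1/0. *)
Lemma farey_bracket_exists (th : R) (I J : Z) :
  irrational th -> 0 < th -> (0 <= I)%Z -> (0 <= J)%Z ->
  exists a b c d, farey_bracket th a b c d /\ box_adapted I J a b c d.
Proof.
  intros Hirr Hth HI HJ.
  apply (farey_descent th I J Hirr (Z.to_nat (I + J + 1)) 0 1 1 0); try lia.
  repeat split; try lia; simpl; lra.
Qed.

(* Since b c - a d = 1, every lattice vector (P,Q) has integer coordinates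
   (s,t) in the basis formed by the vectors (-a,b) and (c,-d) of A and B. *)
Lemma farey_coordinates (th : R) (a b c d P Q : Z) : (b * c - a * d = 1)%Z ->
  exists s t : Z, (P = t * c - s * a)%Z /\ (Q = s * b - t * d)%Z /\
  IZR P + IZR Q * th = IZR s * (IZR b * th - IZR a) + IZR t * (IZR c - IZR d * th).
Proof.
  intros Hdet. exists (P * d + Q * c)%Z, (P * b + Q * a)%Z.
  assert (HP : P = ((P * b + Q * a) * c - (P * d + Q * c) * a)%Z).
  { replace ((P * b + Q * a) * c - (P * d + Q * c) * a)%Z with (P * (b * c - a * d))%Z
      by ring. rewrite Hdet. ring. }
  assert (HQ : Q = ((P * d + Q * c) * b - (P * b + Q * a) * d)%Z).
  { replace ((P * d + Q * c) * b - (P * b + Q * a) * d)%Z with (Q * (b * c - a * d))%Z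
      by ring. rewrite Hdet. ring. }
  split; [exact HP|]. split; [exact HQ|].
  assert (Hdet' : IZR b * IZR c - IZR a * IZR d = 1).
  { rewrite <- !mult_IZR, <- minus_IZR, Hdet. reflexivity. }
  rewrite !plus_IZR, !mult_IZR.
  transitivity ((IZR P + IZR Q * th) * (IZR b * IZR c - IZR a * IZR d));
    [rewrite Hdet'; ring | ring].
Qed.

(** * Gaps between consecutive points of a symmetric block *)

Section ConsecutiveGap.

Variables (th : R) (a b c d I J : Z).
Hypothesis Hfarey : farey_bracket th a b c d.
Hypothesis Hbox : box_adapted I J a b c d.

Let A := IZR b * th - IZR a.
Let B := IZR c - IZR d * th.

Variables (ix jx iy jy : Z).
Hypothesis Hx : (0 <= ix <= I)%Z /\ (0 <= jx <= J)%Z.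
Hypothesis Hy : (0 <= iy <= I)%Z /\ (0 <= jy <= J)%Z.
Hypothesis Hxy : V th ix jx < V th iy jy.
Hypothesis Hcons : no_point_between th (V th ix jx) (V th iy jy).
Hypothesis Hmirror : no_point_between th (V th (I - iy) (J - jy)) (V th (I - ix) (J - jx)).

(* The gap is at most A + B: otherwise the reflected points force ix + c > I
   and jx + b > J, and then x + A + B is an intermediate point of N^2. *)
Lemma gap_le_sum : V th iy jy - V th ix jx <= A + B.
Proof.
  destruct Hfarey as (_ & Ha & Hb & Hc & Hd & HA & HB). destruct Hbox as (HaI & HdJ & _).
  fold A B in HA, HB.
  apply Rnot_lt_le. intros Hbig.
  assert (Hi : (I < ix + c)%Z).
  { apply Z.nle_gt. intros Hle.
    apply (Hmirror (I - ix - c)%Z (J - jx + d)%Z); [lia | lia |].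
    unfold A, B in *. unfold_V. lra. }
  assert (Hj : (J < jx + b)%Z).
  { apply Z.nle_gt. intros Hle.
    apply (Hmirror (I - ix + a)%Z (J - jx - b)%Z); [lia | lia |].
    unfold A, B in *. unfold_V. lra. }
  apply (Hcons (ix - a + c)%Z (jx + b - d)%Z); [lia | lia |].
  unfold A, B in *. unfold_V. lra.
Qed.

(* Both coordinates of the gap in the basis (A,B) are nonnegative: a negative
   coordinate would make the gap vector at least as long as the mediant in
   both directions, which does not fit into the box. *)
Lemma gap_coordinates_nonneg (s t : Z) :
  (iy - ix = t * c - s * a)%Z -> (jy - jx = s * b - t * d)%Z ->
  0 < IZR s * A + IZR t * B -> (0 <= s)%Z /\ (0 <= t)%Z.
Proof.
  intros HP HQ Hpos.
  destruct Hfarey as (_ & Ha & Hb & Hc & Hd & HA & HB). destruct Hbox as (_ & _ & Hmed).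
  fold A B in HA, HB.
  assert (Hnot_both : ~ ((s <= 0)%Z /\ (t <= 0)%Z)).
  { intros [Hs Ht]. apply IZR_le in Hs. apply IZR_le in Ht. nra. }
  split; apply Z.nlt_ge; intros Hneg.
  - assert (Ht : (1 <= t)%Z) by lia. destruct Hmed; nia.
  - assert (Hs : (1 <= s)%Z) by lia. destruct Hmed; nia.
Qed.

Lemma consecutive_gap :
  let g := V th iy jy - V th ix jx in g = A \/ g = B \/ g = A + B.
Proof.
  intros g.
  pose proof Hfarey as (Hdet & Ha & Hb & Hc & Hd & HA & HB). fold A B in HA, HB.
  destruct (farey_coordinates th a b c d (iy - ix)%Z (jy - jx)%Z Hdet)
    as (s & t & HP & HQ & Hval).
  assert (Hg : g = IZR s * A + IZR t * B).
  { unfold g, A, B. rewrite <- Hval. unfold_V. ring. }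
  assert (Hpos : 0 < g) by (unfold g; lra).
  assert (Hle : g <= A + B) by apply gap_le_sum.
  destruct (gap_coordinates_nonneg s t HP HQ ltac:(lra)) as [Hs Ht].
  destruct (Z.eq_dec t 0) as [Ht0|Ht0]; [|destruct (Z.eq_dec s 0) as [Hs0|Hs0]].
  - (* g = s A: for s >= 2, the point x + A lies strictly between x and y *)
    subst t. left. destruct (Z.eq_dec s 1) as [Hs1|Hs1]; [subst s; lra|].
    exfalso. assert (Hs2 : (2 <= s)%Z).
    { destruct (Z.eq_dec s 0) as [->|Hs0]; [simpl in Hg; lra | lia]. }
    apply (Hcons (ix - a)%Z (jx + b)%Z); [nia | lia |].
    apply IZR_le in Hs2. unfold A, B in *. unfold_V. nra.
  - (* g = t B: for t >= 2, the point x + B lies strictly between x and y *)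
    subst s. right; left. destruct (Z.eq_dec t 1) as [Ht1|Ht1]; [subst t; lra|].
    exfalso. assert (Ht2 : (2 <= t)%Z) by lia.
    apply (Hcons (ix + c)%Z (jx - d)%Z); [lia | nia |].
    apply IZR_le in Ht2. unfold A, B in *. unfold_V. nra.
  -
    right; right.
    assert (Hs1 : (1 <= s)%Z) by lia. assert (Ht1 : (1 <= t)%Z) by lia.
    apply IZR_le in Hs1. apply IZR_le in Ht1. nra.
Qed.

End ConsecutiveGap.

Lemma symmetric_chain_gaps (th : R) (L : nat) (X Y : nat -> Z) (I J : Z) :
  irrational th -> 0 < th ->
  (forall t, (0 <= X t)%Z /\ (0 <= Y t)%Z) ->
  (forall t, (t <= L)%nat -> X (L - t)%nat = (I - X t)%Z /\ Y (L - t)%nat = (J - Y t)%Z) ->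
  (forall t, (t < L)%nat -> V th (X t) (Y t) < V th (X (S t)) (Y (S t))) ->
  (forall t, (t < L)%nat -> no_point_between th (V th (X t) (Y t)) (V th (X (S t)) (Y (S t)))) ->
  exists A B : R, forall t, (t < L)%nat ->
    let g := V th (X (S t)) (Y (S t)) - V th (X t) (Y t) in g = A \/ g = B \/ g = A + B.
Proof.
  intros Hirr Hth Hnonneg Hsym Hincr Hcons.
  assert (Hbox : forall t, (t <= L)%nat -> (0 <= X t <= I)%Z /\ (0 <= Y t <= J)%Z).
  { intros t Ht. destruct (Hsym t Ht) as [EX EY].
    pose proof (Hnonneg t). pose proof (Hnonneg (L - t)%nat). lia. }
  destruct (Hbox O ltac:(lia)) as [HI HJ].
  destruct (farey_bracket_exists th I J Hirr Hth ltac:(lia) ltac:(lia))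
    as (a & b & c & d & Hfarey & Hadapted).
  exists (IZR b * th - IZR a), (IZR c - IZR d * th). intros t Ht.
  apply (consecutive_gap th a b c d I J Hfarey Hadapted);
    [apply Hbox; lia | apply Hbox; lia | apply Hincr, Ht | apply Hcons, Ht |].
  (* the reflections of the points t, t+1 are the consecutive points L-t-1, L-t *)
  destruct (Hsym (S t) ltac:(lia)) as [<- <-]. destruct (Hsym t ltac:(lia)) as [<- <-].
  replace (L - t)%nat with (S (L - S t)) by lia.
  apply Hcons. lia.
Qed.

(** * The increasing enumeration of S(theta) *)

Lemma palindromic_increments (f : nat -> R) (i L : nat) :
  (forall t, (t < L)%nat -> delta f (i + t) = delta f (i + (L - 1 - t))) ->
  forall t, (t <= L)%nat -> f (i + t)%nat + f (i + (L - t))%nat = f i + f (i + L)%nat.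
Proof.
  intros Hpal. induction t as [|t IH]; intros Ht.
  - rewrite Nat.add_0_r, Nat.sub_0_r. ring.
  - specialize (IH ltac:(lia)). specialize (Hpal t ltac:(lia)). unfold delta in Hpal.
    replace (S (i + (L - 1 - t))) with (i + (L - t))%nat in Hpal by lia.
    replace (i + (L - 1 - t))%nat with (i + (L - S t))%nat in Hpal by lia.
    replace (i + S t)%nat with (S (i + t)) by lia.
    lra.
Qed.

Section Enumeration.

Variables (theta : R) (s : nat -> R).
Hypothesis Henum : is_S_enum theta s.

Lemma enum_le (m n : nat) : (m <= n)%nat -> s m <= s n.
Proof.
  destruct Henum as [Hmono _]. induction 1 as [|n _ IH]; [lra|].
  specialize (Hmono n). lra.
Qed.

Lemma enum_consecutive (n : nat) :
  forall x, inS theta x -> ~ (s n < x < s (S n)).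
Proof.
  destruct Henum as (_ & _ & Hall). intros x Hx [Hlo Hhi].
  destruct (Hall x Hx) as [m <-].
  destruct (le_lt_dec m n) as [Hmn|Hnm]; [pose proof (enum_le m n Hmn); lra|].
  pose proof (enum_le (S n) m Hnm). lra.
Qed.

Lemma enum_coordinates :
  exists X Y : nat -> Z, forall n, (0 <= X n)%Z /\ (0 <= Y n)%Z /\ s n = V theta (X n) (Y n).
Proof.
  destruct Henum as (_ & Hin & _).
  destruct (choice (fun n (xy : Z * Z) =>
      (0 <= fst xy)%Z /\ (0 <= snd xy)%Z /\ s n = V theta (fst xy) (snd xy)))
    as [f Hf].
  - intros n. destruct (Hin n) as (i & j & E).
    exists (Z.of_nat i, Z.of_nat j). simpl. repeat split; try lia.
    unfold V. rewrite <- !INR_IZR_INZ. exact E.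
  - exists (fun n => fst (f n)), (fun n => snd (f n)). exact Hf.
Qed.

(* A block of the enumeration with palindromic gaps has at most three gap
   values: its lattice points form a symmetric chain of consecutive points. *)
Lemma palindromic_block_gaps (i L : nat) :
  irrational theta -> 0 < theta ->
  (forall t, (t < L)%nat -> delta s (i + t) = delta s (i + (L - 1 - t))) ->
  exists A B : R, forall t, (t < L)%nat ->
    delta s (i + t) = A \/ delta s (i + t) = B \/ delta s (i + t) = A + B.
Proof.
  intros Hirr Hth Hpal.
  destruct enum_coordinates as (X & Y & HXY).
  pose (Xb t := X (i + t)%nat). pose (Yb t := Y (i + t)%nat).
  assert (Hval : forall t, s (i + t)%nat = V theta (Xb t) (Yb t)) by (intro; apply HXY).
  destruct (symmetric_chain_gaps theta L Xb Yb (Xb O + Xb L) (Yb O + Yb L) Hirr Hth)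
    as (A & B & H3).
  - intros t. split; apply HXY.
  - intros t Ht. apply (V_inj theta _ _ _ _ Hirr).
    pose proof (palindromic_increments s i L Hpal t Ht) as E.
    rewrite !Hval in E. rewrite <- (Nat.add_0_r i), Hval in E. unfold_V. lra.
  - intros t Ht. rewrite <- !Hval. destruct Henum as [Hmono _].
    rewrite Nat.add_succ_r. apply Hmono.
  - intros t Ht zi zj Hzi Hzj Hbetween. rewrite <- !Hval, Nat.add_succ_r in Hbetween.
    apply (enum_consecutive (i + t) (V theta zi zj)); [|exact Hbetween].
    exists (Z.to_nat zi), (Z.to_nat zj).
    unfold V. rewrite !INR_IZR_INZ, !Z2Nat.id; auto.
  - exists A, B. intros t Ht. unfold delta.
    rewrite <- Nat.add_succ_r, !Hval. apply H3, Ht.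
Qed.

End Enumeration.

Theorem corollary6 (theta : R) (s : nat -> R) :
  1 < theta -> theta < 2 -> irrational theta ->
  is_S_enum theta s ->
  forall i L : nat,
    factor_palindrome (Lambda_word s) i L ->
    factor_at_most_3_letters (Lambda_word s) i L.
Proof.
  intros Hth1 _ Hirr Henum i L Hpal.
  (* palindromic labels mean palindromic gaps, since labels are injective *)
  assert (Hgaps : forall t, (t < L)%nat -> delta s (i + t) = delta s (i + (L - 1 - t))).
  { intros t Ht. apply lam_eq_iff, Hpal, Ht. }
  destruct (palindromic_block_gaps theta s Henum i L Hirr ltac:(lra) Hgaps) as (A & B & H3).
  exact (lam_three_letters (delta s) i L A B (A + B) H3).
Qed.
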